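(* Let $q\ge1$, $M>0$, $\alpha=2^{q+1}+8$, and let $\{J_i\}_{i=1}^m$ be an assignment satisfying $\mathbb{E}\big[(\sum_{i=1}^m(\sum_{j\in J_i}Y_j)^q)^{1/q}\big]\le M$. Then $\sum_{j=1}^n\mathbb{E}[(Y'_j)^q]\le\alpha M^q$.
   Context: Nonnegative random variables $X_{ij}$ (size of job $j$ on machine $i$), with $X_{ij}$ and $X_{i'j'}$ independent whenever $j\ne j'$. For an assignment $\{J_i\}$ (partition of $[n]$), $Y_j:=X_{ij}$ where $j\in J_i$ (so the $Y_j$ are independent). Truncated part $Y'_j:=Y_j\mathbf{1}[Y_j\le M]$. *)

From mathcomp Require Import all_boot all_order all_algebra.
From mathcomp Require Import all_classical all_reals all_analysis.
Set Implicit Arguments. Unset Strict Implicit. Unset Printing Implicit Defensive.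
Import Order.TTheory GRing.Theory Num.Theory.
Local Open Scope classical_set_scope.
Local Open Scope ring_scope.

Definition trunc (R : realType) (M y : R) : R := if y <= M then y else 0.

(* Size of job j under assignment a (job j goes to machine a j):
   Y_j := X_{a j, j}. *)
Definition Yassign (R : realType) (T : Type) (m n : nat)
  (X : 'I_m -> 'I_n -> T -> R) (a : 'I_n -> 'I_m) (j : 'I_n) : T -> R :=
  X (a j) j.

(* Independence across jobs: the random vectors (X_{1j},...,X_{mj}), j in [n],
   are mutually independent, i.e. for all Borel sets B_{ij},
   P(/\_j /\_i {X_{ij} in B_{ij}}) = prod_j P(/\_i {X_{ij} in B_{ij}}).
   (Taking B_{ij} = setT gives the product rule for every subfamily of jobs.) *)
Definition jobs_independent (R : realType) (d : measure_display)
  (T : measurableType d) (P : probability T R) (m n : nat)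
  (X : 'I_m -> 'I_n -> T -> R) : Prop :=
  forall B : 'I_m -> 'I_n -> set R,
    (forall i j, measurable (B i j)) ->
    P (\bigcap_(j in [set: 'I_n]) \bigcap_(i in [set: 'I_m]) (X i j @^-1` B i j))
    = (\prod_(j < n) P (\bigcap_(i in [set: 'I_m]) (X i j @^-1` B i j)))%E.

From mathcomp Require Import all_boot all_order all_algebra.
From mathcomp Require Import all_classical all_reals all_analysis.
From mathcomp Require Import ring lra measurable_realfun.
Import Order.TTheory GRing.Theory Num.Theory.
Local Open Scope classical_set_scope.
Local Open Scope ring_scope.

(* Put U_j := (Y'_j / M)^q, which are independent and [0,1]-valued.
   Superadditivity of x |-> x^q gives Sum_j (Y'_j)^q <= Sum_i (Sum_(j in J_i) Y_j)^q,
   so the hypothesis yields E[(Sum_j U_j)^(1/q)] <= 1, and it remains to show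
   Sum_j E[U_j] <= 2^(q+1) + 8.  For S := Sum_j U_j independence gives
   Var S <= E S; integrating the pointwise bound
   c^(1/q) (c^2 - (x - 2c)^2) <= c^2 x^(1/q) at c := E S / 2 then yields
   c^(1/q) (c^2 - 2c) <= c^2 E[S^(1/q)] <= c^2, hence c^(1/q) <= 2 once E S >= 8.
   As independence is only available for events, S is first replaced by the
   staircase sum Sum_j floor(N U_j) / N with N := n + 1: a sum of indicators
   within 1 of S, whose second moment is a sum of probabilities of pairwise
   intersections. *)

Section powR_sums.
Context {R : realType}.
Implicit Types q a b : R.

Lemma ler_powRD {q a b} : 1 <= q -> 0 <= a -> 0 <= b ->
  powR a q + powR b q <= powR (a + b) q.
Proof.
move=> q1 a0 b0; have q0 : 0 < q by lra.
have [ab0|ab0] := eqVneq (a + b) 0.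
  have [-> ->] : a = 0 /\ b = 0 by lra.
  by rewrite addr0 powR0 ?gt_eqF // addr0.
rewrite -(mulr_powRB1 a0 q0) -(mulr_powRB1 b0 q0).
rewrite -(mulr_powRB1 (addr_ge0 a0 b0) q0) mulrDl.
have q10 : 0 <= q - 1 by lra.
by rewrite lerD // ler_wpM2l //; apply: ge0_ler_powR => //; rewrite ?nnegrE //; lra.
Qed.

Lemma ler_sum_powR {q} {I : Type} {r : seq I} {Pr : pred I} {f : I -> R} :
  1 <= q -> (forall i, 0 <= f i) ->
  \sum_(i <- r | Pr i) powR (f i) q <= powR (\sum_(i <- r | Pr i) f i) q.
Proof.
move=> q1 f0; have q0 : q != 0 by apply/eqP; lra.
pose K (y1 y2 : R) := y1 <= powR y2 q /\ 0 <= y2.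
suff [] : K (\sum_(i <- r | Pr i) powR (f i) q) (\sum_(i <- r | Pr i) f i) by [].
apply: (big_rec2 K); first by rewrite /K powR0.
move=> i y1 y2 _ [le_y ge0_y2]; split; last by rewrite addr_ge0.
by apply: le_trans (ler_powRD q1 (f0 i) ge0_y2); rewrite lerD.
Qed.

End powR_sums.

Section truncation.
Context {R : realType}.
Implicit Types M q y : R.

Lemma trunc_ge0 M y : 0 <= y -> 0 <= trunc M y.
Proof. by rewrite /trunc; case: ifP. Qed.

Lemma trunc_le M y : 0 <= y -> trunc M y <= y.
Proof. by rewrite /trunc; case: ifP. Qed.

Lemma trunc_le_bound M y : 0 <= M -> trunc M y <= M.
Proof. by rewrite /trunc; case: ifP. Qed.

Lemma measurable_trunc M : measurable_fun setT (trunc M).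
Proof.
apply: measurable_fun_ifT; last 2 first.
- exact: measurable_id.
- exact: measurable_cst.
by apply: measurable_fun_ler => //; exact: measurable_cst.
Qed.

Definition scaled_trunc M q y := powR (trunc M y) q / powR M q.

Lemma measurable_scaled_trunc M q : measurable_fun setT (scaled_trunc M q).
Proof.
apply: measurable_funM => //.
exact: measurableT_comp (measurable_powR _) (measurable_trunc M).
Qed.

Lemma scaled_trunc_itv M q y : 0 < M -> 0 <= q -> 0 <= y ->
  0 <= scaled_trunc M q y <= 1.
Proof.
move=> M0 q0 y0; rewrite divr_ge0 ?powR_ge0 //= ler_pdivrMr ?powR_gt0 // mul1r.
by rewrite ge0_ler_powR ?nnegrE ?trunc_ge0 ?trunc_le_bound ?(ltW M0).
Qed.

Lemma root_sum_scaled_trunc_le (m n : nat) (a : 'I_n -> 'I_m) M q (y : 'I_n -> R) :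
  1 <= q -> 0 < M -> (forall j, 0 <= y j) ->
  powR (\sum_j scaled_trunc M q (y j)) q^-1 <=
  M^-1 * powR (\sum_i powR (\sum_(j | a j == i) y j) q) q^-1.
Proof.
move=> q1 M0 y0; have q0 : 0 < q by lra.
have sum_ge0 (I : finType) (f : I -> R) : 0 <= \sum_i powR (f i) q.
  by apply: sumr_ge0 => i _; exact: powR_ge0.
rewrite -mulr_suml powRM ?invr_ge0 ?powR_ge0 // mulrC.
have -> : powR (powR M q)^-1 q^-1 = M^-1.
  by rewrite -powRN -powRrM mulNr mulfV ?gt_eqF // powR_inv1 // ltW.
rewrite ler_wpM2l ?invr_ge0 ?(ltW M0) // ge0_ler_powR ?invr_ge0 ?nnegrE ?(ltW q0) //.
rewrite (partition_big a predT) //=; apply: ler_sum => i _.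
apply: le_trans (ler_sum_powR q1 y0).
by apply: ler_sum => j _; rewrite ge0_ler_powR ?nnegrE ?trunc_ge0 ?trunc_le //; lra.
Qed.

End truncation.

Section staircase.
Context {R : realType}.

(* [stair N x] is min(N, floor x) for x >= 0. *)
Definition stair (N : nat) (x : R) : R := \sum_(k < N) ((k.+1)%:R <= x)%R%:R.

Lemma stairS N x : stair N.+1 x = stair N x + ((N.+1)%:R <= x)%R%:R.
Proof. by rewrite /stair big_ord_recr. Qed.

Lemma stair_full N x : N%:R <= x -> stair N x = N%:R.
Proof.
move=> Nx; rewrite /stair (eq_bigr (fun=> 1)) ?sumr_const ?card_ord // => k _.
by rewrite (le_trans _ Nx) // ler_nat.
Qed.

Lemma stair_le N x : 0 <= x -> stair N x <= x.
Proof.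
move=> x0; elim: N => [|N IH]; first by rewrite /stair big_ord0.
rewrite stairS; have [Nx|_] := leP (N.+1)%:R x; last by rewrite addr0.
by rewrite stair_full ?natr1 // (le_trans _ Nx) // ler_nat.
Qed.

Lemma stair_ge N x : x <= N%:R -> x <= stair N x + 1.
Proof.
elim: N => [|N IH] xN; first by rewrite /stair big_ord0 add0r (le_trans xN) ?ler01.
rewrite stairS -natr1 in xN *; have [Nx|xN1] := leP (N%:R + 1) x.
  by rewrite stair_full /=; lra.
rewrite addr0; have [/IH //|Nx] := leP x N%:R.
by rewrite stair_full; lra.
Qed.

End staircase.

Section probability_Rintegral.
Context {d} {T : measurableType d} {R : realType} (P : probability T R).
Implicit Types f g : T -> R.

Lemma bounded_integrable f (C : R) : measurable_fun setT f ->
  (forall t, 0 <= f t <= C) -> P.-integrable setT (EFin \o f).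
Proof.
move=> mf fC; apply: measurable_bounded_integrable => //.
  by rewrite (le_lt_trans (probability_le1 P measurableT)) ?ltry.
rewrite /bounded_near; near=> C' => t _ /=; have /andP[f0 f_le] := fC t.
by rewrite ger0_norm // (le_trans f_le) //; near: C'; exact: nbhs_pinfty_ge (num_real C).
Unshelve. all: end_near. Qed.

Lemma integrable_powR f (C p : R) : 0 <= p -> measurable_fun setT f ->
  (forall t, 0 <= f t <= C) -> P.-integrable setT (EFin \o (fun t => powR (f t) p)).
Proof.
move=> p0 mf fC; apply: (bounded_integrable _ (powR C p)).
  exact: measurableT_comp (measurable_powR _) mf.
move=> t; have /andP[f0 f_le] := fC t.
by rewrite powR_ge0 ge0_ler_powR // nnegrE (le_trans f0).
Qed.

Lemma integrable_EFinD f g : P.-integrable setT (EFin \o f) ->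
  P.-integrable setT (EFin \o g) -> P.-integrable setT (EFin \o (fun t => f t + g t)).
Proof.
move=> fi gi; rewrite (_ : EFin \o _ = (EFin \o f) \+ (EFin \o g))%E.
  exact: integrableD.
by apply/funext => t /=; rewrite EFinD.
Qed.

Lemma integrable_EFinZl (k : R) f : P.-integrable setT (EFin \o f) ->
  P.-integrable setT (EFin \o (fun t => k * f t)).
Proof.
move=> fi; rewrite (_ : EFin \o _ = (fun t => k%:E * (EFin \o f) t))%E.
  exact: integrableZl.
by apply/funext => t /=; rewrite EFinM.
Qed.

Lemma Rintegral_cst_prob (r : R) : \int[P]_t r = r.
Proof.
by rewrite Rintegral_cst // (_ : fine _ = 1) ?mulr1 // (congr1 fine (probability_setT P)).
Qed.

Lemma Rintegral_indic (A : set T) : measurable A -> \int[P]_t \1_A t = fine (P A).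
Proof. by move=> mA; rewrite /Rintegral integral_indic // setIT. Qed.

Lemma EFin_Rintegral f : P.-integrable setT (EFin \o f) ->
  (\int[P]_t (f t)%:E)%E = (\int[P]_t f t)%:E.
Proof. by move=> fi; rewrite /Rintegral fineK // integrable_fin_num. Qed.

Lemma integrable_EFin_sum I (s : seq I) (f : I -> T -> R) :
  (forall i, P.-integrable setT (EFin \o f i)) ->
  P.-integrable setT (EFin \o (fun t => \sum_(i <- s) f i t)).
Proof.
move=> fi; elim: s => [|i s IH].
  under eq_fun do rewrite big_nil; exact: finite_measure_integrable_cst.
under eq_fun do rewrite big_cons; exact: integrable_EFinD.
Qed.

Lemma Rintegral_sum I (s : seq I) (f : I -> T -> R) :
  (forall i, P.-integrable setT (EFin \o f i)) ->
  \int[P]_t (\sum_(i <- s) f i t) = \sum_(i <- s) \int[P]_t f i t.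
Proof.
move=> fi; elim: s => [|i s IH].
  by under eq_fun do rewrite big_nil; rewrite big_nil Rintegral_cst_prob.
under eq_fun do rewrite big_cons.
by rewrite RintegralD ?IH ?big_cons //; exact: integrable_EFin_sum.
Qed.

End probability_Rintegral.

Lemma powR_quadratic_le (R : realType) (p c x : R) : 0 <= p -> 0 < c -> 0 <= x ->
  powR c p * (c ^+ 2 - (x - 2 * c) ^+ 2) <= c ^+ 2 * powR x p.
Proof.
move=> p0 c0 x0; have [cx|xc] := leP c x.
  apply: (@le_trans _ _ (powR c p * c ^+ 2)).
    by rewrite ler_wpM2l ?powR_ge0 // lerBlDr lerDl sqr_ge0.
  by rewrite mulrC ler_wpM2l ?sqr_ge0 // ge0_ler_powR ?nnegrE // ltW.
apply: (@le_trans _ _ 0); last by rewrite mulr_ge0 ?sqr_ge0 ?powR_ge0.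
by rewrite mulr_ge0_le0 ?powR_ge0 // subr_le0; nra.
Qed.

Section second_moment_method.
Context {d} {T : measurableType d} {R : realType} (P : probability T R).

Lemma Rintegral_powR_ge (s : T -> R) (C c p : R) : 0 <= p -> 0 < c ->
  measurable_fun setT s -> (forall t, 0 <= s t <= C) ->
  powR c p * (c ^+ 2 - (\int[P]_t s t ^+ 2 - 4 * c * \int[P]_t s t + 4 * c ^+ 2))
    <= c ^+ 2 * \int[P]_t powR (s t) p.
Proof.
move=> p0 c0 ms sC; set k := powR c p.
have int_s : P.-integrable setT (EFin \o s) := bounded_integrable P _ _ ms sC.
have int_s2 : P.-integrable setT (EFin \o (fun t => s t ^+ 2)).
  apply: (bounded_integrable P _ (C ^+ 2)); first exact: measurable_funX.
  by move=> t; have /andP[s0 s_le] := sC t; rewrite sqr_ge0 lerXn2r // nnegrE (le_trans s0).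
have int_sp := integrable_powR P _ _ _ p0 ms sC.
pose g t := k * (c ^+ 2 - 4 * c ^+ 2) + (4 * k * c * s t + - k * s t ^+ 2).
have int_g : P.-integrable setT (EFin \o g).
  apply: integrable_EFinD; first exact: finite_measure_integrable_cst.
  by apply: integrable_EFinD; exact: integrable_EFinZl.
have Eg : \int[P]_t g t =
    k * (c ^+ 2 - 4 * c ^+ 2) + (4 * k * c * \int[P]_t s t + - k * \int[P]_t s t ^+ 2).
  rewrite RintegralD //; last 2 first.
  - exact: finite_measure_integrable_cst.
  - by apply: integrable_EFinD; exact: integrable_EFinZl.
  rewrite RintegralD ?RintegralZl ?Rintegral_cst_prob //;
    first exact: finite_measure_integrable_cst.
  - exact: (integrable_EFinZl P _ _ int_s).
  - exact: (integrable_EFinZl P _ _ int_s2).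
have g_le t : g t <= c ^+ 2 * powR (s t) p.
  have -> : g t = k * (c ^+ 2 - (s t - 2 * c) ^+ 2) by rewrite /g; ring.
  by apply: powR_quadratic_le => //; case/andP: (sC t).
have := le_Rintegral measurableT int_g (integrable_EFinZl P (c ^+ 2) _ int_sp)
  (fun t _ => g_le t).
rewrite Eg RintegralZl //; nra.
Qed.

Lemma mean_le_of_small_variance (s : T -> R) (C q : R) : 1 <= q ->
  measurable_fun setT s -> (forall t, 0 <= s t <= C) ->
  \int[P]_t (s t ^+ 2) <= (\int[P]_t s t) ^+ 2 + \int[P]_t s t ->
  \int[P]_t powR (s t) q^-1 <= 1 ->
  8 <= \int[P]_t s t -> \int[P]_t s t <= powR 2 (q + 1).
Proof.
move=> q1 ms sC var_le root_le1 mu8; have q0 : 0 < q by lra.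
have qV0 : 0 <= q^-1 by rewrite invr_ge0 ltW.
have c0 : 0 < \int[P]_t s t / 2 by lra.
have := Rintegral_powR_ge _ _ _ _ qV0 c0 ms sC.
set mu := \int[P]_t s t in var_le mu8 c0 *; set c := mu / 2 in c0 *.
set k := powR c q^-1 => moment_le.
have muE : mu = 2 * c by rewrite /c; lra.
have kq : powR k q = c by rewrite /k -powRrM mulVf ?gt_eqF // powRr1 //; lra.
have k0 : 0 <= k by exact: powR_ge0.
clearbody mu c k; subst mu.
have kc : k * (c ^+ 2 - 2 * c) <= c ^+ 2.
  have : c ^+ 2 * \int[P]_t powR (s t) q^-1 <= c ^+ 2 by rewrite ler_piMr ?sqr_ge0.
  have := ler_wpM2l k0 var_le; nra.
have k2 : k <= 2.
  have hint : 0 <= k * (c * (c - 4)) by rewrite mulr_ge0 // mulr_ge0 //; lra.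
  rewrite -(ler_pM2r (_ : 0 < c ^+ 2)) ?exprn_gt0 //; nra.
have c2q : c <= powR 2 q by rewrite -kq ge0_ler_powR ?nnegrE //; lra.
rewrite powRD ?powRr1 //; first lra.
by apply/implyP => _; rewrite pnatr_eq0.
Qed.

End second_moment_method.

Section indicator_moments.
Context {d} {T : measurableType d} {R : realType} (P : probability T R).

Lemma integrable_sum_indic (I : finType) (B : I -> set T) :
  (forall i, measurable (B i)) ->
  P.-integrable setT (EFin \o (fun t => \sum_i \1_(B i) t)).
Proof. by move=> mB; apply: integrable_EFin_sum => i; exact: integrable_indic. Qed.

Lemma Rintegral_sum_indic (I : finType) (B : I -> set T) :
  (forall i, measurable (B i)) ->
  \int[P]_t (\sum_i \1_(B i) t) = \sum_i fine (P (B i)).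
Proof.
move=> mB; rewrite Rintegral_sum => [|i]; last exact: integrable_indic.
by apply: eq_bigr => i _; rewrite Rintegral_indic.
Qed.

Lemma sqr_sum_indic (I : finType) (B : I -> set T) (t : T) :
  (\sum_i \1_(B i) t) ^+ 2 = \sum_i \sum_j \1_(B i `&` B j) t :> R.
Proof.
rewrite expr2 mulr_suml; apply: eq_bigr => i _.
by rewrite mulr_sumr; apply: eq_bigr => j _; rewrite indicI.
Qed.

Lemma integrable_sqr_sum_indic (I : finType) (B : I -> set T) :
  (forall i, measurable (B i)) ->
  P.-integrable setT (EFin \o (fun t => (\sum_i \1_(B i) t) ^+ 2)).
Proof.
move=> mB; under eq_fun do rewrite sqr_sum_indic.
by apply: integrable_EFin_sum => i; apply: integrable_sum_indic => j; exact: measurableI.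
Qed.

Lemma Rintegral_sqr_sum_indic_le (J K : finType) (B : J * K -> set T) :
  (forall x, measurable (B x)) ->
  (forall x y, x.1 != y.1 -> P (B x `&` B y) = (P (B x) * P (B y))%E) ->
  \int[P]_t ((\sum_x \1_(B x) t) ^+ 2) <=
    (\sum_x fine (P (B x))) ^+ 2 + #|K|%:R * \sum_x fine (P (B x)).
Proof.
move=> mB indepB; pose p x := fine (P (B x)).
change (\int[P]_t ((\sum_x \1_(B x) t) ^+ 2) <=
  (\sum_x p x) ^+ 2 + #|K|%:R * \sum_x p x).
have p_ge0 x : 0 <= p x by apply/fine_ge0/measure_ge0.
have mBB x y : measurable (B x `&` B y) by exact: measurableI.
under eq_fun do rewrite sqr_sum_indic.
rewrite Rintegral_sum => [|x]; last exact: integrable_sum_indic.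
rewrite (eq_bigr (fun x => \sum_y fine (P (B x `&` B y)))) => [|x _]; last first.
  exact: Rintegral_sum_indic.
have pI x y : fine (P (B x `&` B y)) <= p x * p y + (x.1 == y.1)%:R * p x.
  have [xy|xy] := eqVneq x.1 y.1; last first.
    by rewrite indepB // fineM ?fin_num_measure // mul0r addr0.
  rewrite mul1r ler_wpDl ?mulr_ge0 //.
  by apply: fine_le; rewrite ?fin_num_measure //; exact: measureIl.
have blockE x : \sum_(y : J * K) (x.1 == y.1)%:R = #|K|%:R :> R.
  rewrite -(pair_big predT predT (fun j (_ : K) => (x.1 == j)%:R : R)) /=.
  rewrite (bigD1 x.1) //= eqxx sumr_const [X in _ + X]big1 ?addr0 // => j jx.
  by rewrite big1 // => k _; rewrite eq_sym (negPf jx).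
apply: le_trans (ler_sum _ (fun x _ => ler_sum _ (fun y _ => pI x y))) _.
rewrite (eq_bigr (fun x => p x * \sum_y p y + #|K|%:R * p x)) => [|x _].
  by rewrite big_split /= -mulr_suml -mulr_sumr expr2.
by rewrite big_split /= -mulr_sumr -mulr_suml blockE.
Qed.

End indicator_moments.

Definition pairwise_indep {d} {T : measurableType d} {R : realType}
    (P : probability T R) {n : nat} (U : 'I_n -> T -> R) : Prop :=
  forall (j l : 'I_n) (B1 B2 : set R), j != l -> measurable B1 -> measurable B2 ->
  P (U j @^-1` B1 `&` U l @^-1` B2) = (P (U j @^-1` B1) * P (U l @^-1` B2))%E.

Section staircase_approximation.
Context {d} {T : measurableType d} {R : realType} (P : probability T R).
Variables (n : nat) (U : 'I_n -> T -> R).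
Hypothesis mU : forall j, measurable_fun setT (U j).
Hypothesis U01 : forall j t, 0 <= U j t <= 1.

Local Notation N := n.+1.

Definition level_event (x : 'I_n * 'I_N) : set T :=
  U x.1 @^-1` `[N%:R^-1 * (x.2.+1)%:R, +oo[%classic.

Lemma measurable_level_event x : measurable (level_event x).
Proof. by rewrite /level_event -[_ @^-1` _]setTI; exact: mU. Qed.

Lemma indic_level_event x t :
  \1_(level_event x) t = ((x.2.+1)%:R <= N%:R * U x.1 t)%R%:R :> R.
Proof.
rewrite indicE -ler_pdivrMl ?ltr0n //; congr (_%:R).
have [/set_mem|/negP ge] := boolP (t \in level_event x).
  by rewrite /level_event /= in_itv /= andbT => ->.
case: leP => //= le_t; exfalso; apply: ge; apply/mem_set.
by rewrite /level_event /= in_itv /= andbT le_t.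
Qed.

Lemma sum_level_event t :
  \sum_x \1_(level_event x) t = \sum_j stair N (N%:R * U j t).
Proof.
by rewrite /stair [RHS]pair_big; apply: eq_bigr => -[j k] _; exact: indic_level_event.
Qed.

Definition stair_approx (t : T) : R := N%:R^-1 * \sum_x \1_(level_event x) t.

Lemma measurable_stair_approx : measurable_fun setT stair_approx.
Proof.
apply: measurable_funM => //; apply: measurable_sum => x.
exact: measurable_indic (measurable_level_event x).
Qed.

Lemma stair_approx_le t : stair_approx t <= \sum_j U j t.
Proof.
rewrite /stair_approx sum_level_event mulr_sumr; apply: ler_sum => j _.
have [U0 _] := andP (U01 j t).
by rewrite ler_pdivrMl ?ltr0n // stair_le // mulr_ge0.
Qed.

Lemma le_stair_approx t : \sum_j U j t <= stair_approx t + 1.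
Proof.
apply: (@le_trans _ _ (\sum_j (N%:R^-1 * stair N (N%:R * U j t) + N%:R^-1))).
  apply: ler_sum => j _; have [_ U1] := andP (U01 j t).
  by rewrite -[X in _ + X]mulr1 -mulrDr ler_pdivlMl ?ltr0n // stair_ge // ler_piMr.
rewrite big_split /= -mulr_sumr -sum_level_event lerD2l sumr_const card_ord.
by rewrite -[_ *+ n]mulr_natr ler_pdivrMl ?ltr0n // mulr1 ler_nat.
Qed.

Lemma stair_approx_moments : pairwise_indep P U ->
  \int[P]_t (stair_approx t ^+ 2) <=
    (\int[P]_t stair_approx t) ^+ 2 + \int[P]_t stair_approx t.
Proof.
move=> indepU; have mB := measurable_level_event.
have := Rintegral_sqr_sum_indic_le P _ _ _ mB.
rewrite card_ord => /(_ (fun x y xy => indepU _ _ _ _ xy (measurable_itv _) (measurable_itv _))).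
set nu := \sum_x _ => E2.
have nu0 : 0 <= nu by apply: sumr_ge0 => x _; apply/fine_ge0/measure_ge0.
rewrite /stair_approx RintegralZl // ?Rintegral_sum_indic //; last exact: integrable_sum_indic.
under eq_fun do rewrite exprMn.
rewrite RintegralZl //; last exact: integrable_sqr_sum_indic.
apply: le_trans (ler_wpM2l _ E2) _; first by rewrite exprn_ge0 // invr_ge0.
rewrite le_eqVlt; apply/orP; left; apply/eqP.
by rewrite -/nu; field; rewrite addrC natr1 pnatr_eq0.
Qed.

Lemma sum_U_itv t : 0 <= \sum_j U j t <= n%:R.
Proof.
rewrite sumr_ge0 => [|j _]; last by case/andP: (U01 j t).
rewrite -[X in _ <= X%:R]card_ord -sumr_const.
by apply: ler_sum => j _; case/andP: (U01 j t).
Qed.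

Lemma stair_approx_itv t : 0 <= stair_approx t <= n%:R.
Proof.
have s0 : 0 <= stair_approx t.
  by rewrite mulr_ge0 ?invr_ge0 // sumr_ge0 // => x _; exact: indic_ge0.
by rewrite s0 (le_trans (stair_approx_le t)) //; case/andP: (sum_U_itv t).
Qed.

Lemma root_moment_stair_approx_le1 {q : R} : 0 < q ->
  (\int[P]_t (powR (\sum_j U j t) q^-1)%:E <= 1)%E ->
  \int[P]_t powR (stair_approx t) q^-1 <= 1.
Proof.
move=> q0 root_le1; have qV0 : 0 <= q^-1 by rewrite invr_ge0 ltW.
have mSU : measurable_fun setT (fun t => \sum_j U j t) by exact: measurable_sum.
have int_root := integrable_powR P _ _ _ qV0 mSU sum_U_itv.
apply: (@le_trans _ _ (\int[P]_t powR (\sum_j U j t) q^-1)).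
  apply: le_Rintegral => // [|t _].
    exact: integrable_powR qV0 measurable_stair_approx stair_approx_itv.
  have /andP[s0 _] := stair_approx_itv t.
  by rewrite ge0_ler_powR ?nnegrE ?stair_approx_le //; case/andP: (sum_U_itv t).
by rewrite -lee_fin -EFin_Rintegral.
Qed.

Lemma sum_Rintegral_le_of_root_moment (q : R) : 1 <= q -> pairwise_indep P U ->
  (\int[P]_t (powR (\sum_j U j t) q^-1)%:E <= 1)%E ->
  \sum_j \int[P]_t U j t <= powR 2 (q + 1) + 8.
Proof.
move=> q1 indepU root_le1; have q0 : 0 < q by lra.
have int_s := bounded_integrable P _ _ measurable_stair_approx stair_approx_itv.
have mean_s : \int[P]_t stair_approx t <= powR 2 (q + 1) + 7.
  have [mu8|] := leP 8 (\int[P]_t stair_approx t).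
    have := mean_le_of_small_variance P _ _ _ q1 measurable_stair_approx
      stair_approx_itv (stair_approx_moments indepU)
      (root_moment_stair_approx_le1 q0 root_le1) mu8.
    lra.
  have : 1 <= powR 2 (q + 1) by rewrite -[leLHS](powRr0 2) ler_powR //; lra.
  lra.
have int_U j := bounded_integrable P _ _ (mU j) (U01 j).
rewrite -Rintegral_sum //.
apply: le_trans (le_Rintegral measurableT _ _ (fun t _ => le_stair_approx t)) _.
- exact: integrable_EFin_sum.
- by apply: integrable_EFinD => //; exact: finite_measure_integrable_cst.
by rewrite RintegralD ?Rintegral_cst_prob //; [lra | exact: finite_measure_integrable_cst].
Qed.

End staircase_approximation.

Section jobs_independence.
Context {d} {T : measurableType d} {R : realType} (P : probability T R).
Variables (m n : nat) (X : 'I_m -> 'I_n -> T -> R).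

Lemma bigcap_preimage_row (j : 'I_n) (i0 : 'I_m) (B : set R) :
  \bigcap_(i in [set: 'I_m]) (X i j @^-1` (if i == i0 then B else setT)) =
  X i0 j @^-1` B.
Proof.
apply/seteqP; split => [t /(_ i0 I)|t Bt i _]; first by rewrite eqxx.
by case: eqP => // ->.
Qed.

Lemma jobs_independent_pair (i1 i2 : 'I_m) (j l : 'I_n) (B1 B2 : set R) :
  jobs_independent P X -> j != l -> measurable B1 -> measurable B2 ->
  P (X i1 j @^-1` B1 `&` X i2 l @^-1` B2) =
  (P (X i1 j @^-1` B1) * P (X i2 l @^-1` B2))%E.
Proof.
move=> indX jl mB1 mB2; have lj : l != j by rewrite eq_sym.
(* Constrain X_{i1 j} and X_{i2 l} only; every other coordinate ranges over setT. *)
pose row j' := if j' == j then i1 else i2.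
pose C j' := if j' == j then B1 else if j' == l then B2 else setT.
have mC j' : measurable (C j') by rewrite /C; case: ifP => //; case: ifP.
have mB i j' : measurable (if i == row j' then C j' else setT) by case: ifP.
have := indX (fun i j' => if i == row j' then C j' else setT) mB.
rewrite (eq_bigcapr (fun j' _ => bigcap_preimage_row j' (row j') (C j'))).
under eq_bigr do rewrite bigcap_preimage_row.
move=> E.
have capE : \bigcap_(j' in [set: 'I_n]) (X (row j') j' @^-1` C j') =
    X i1 j @^-1` B1 `&` X i2 l @^-1` B2.
  apply/seteqP; split => [t Ct|t [B1t B2t] j' _].
    by split; [move: (Ct j I) | move: (Ct l I)]; rewrite /row /C ?eqxx ?(negPf lj).
  rewrite /row /C; case: ifP => [/eqP -> //|_]; case: ifP => [/eqP -> //|_] //.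
rewrite -capE E (bigD1 j) // (bigD1 l) //= big1 => [|j' /andP[j'j j'l]].
  by rewrite /row /C !eqxx (negPf lj) mule1.
by rewrite /C (negPf j'j) (negPf j'l) preimage_setT probability_setT.
Qed.

Lemma pairwise_indep_jobs (a : 'I_n -> 'I_m) (f : R -> R) :
  measurable_fun setT f -> jobs_independent P X ->
  pairwise_indep P (fun j => f \o X (a j) j).
Proof.
move=> mf indX j l B1 B2 jl mB1 mB2.
have mf' B : measurable B -> measurable (f @^-1` B).
  by move=> mB; rewrite -[_ @^-1` _]setTI; exact: mf.
exact: jobs_independent_pair indX jl (mf' _ mB1) (mf' _ mB2).
Qed.

End jobs_independence.

Section rescaling.
Context {d} {T : measurableType d} {R : realType} (P : probability T R).
Variables (m n : nat) (X : 'I_m -> 'I_n -> T -> R) (a : 'I_n -> 'I_m) (q M : R).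
Hypothesis Xmeas : forall i j, measurable_fun setT (X i j).
Hypothesis Xnonneg : forall i j t, 0 <= X i j t.
Hypotheses (hq : 1 <= q) (hM : 0 < M).

Lemma measurable_load_norm : measurable_fun setT (fun t =>
  powR (\sum_i powR (\sum_(j | a j == i) Yassign X a j t) q) q^-1).
Proof.
apply: measurableT_comp (measurable_powR _) _.
apply: measurable_sum => i; apply: measurableT_comp (measurable_powR _) _.
under eq_fun do rewrite big_mkcond; apply: measurable_sum => j.
by case: (a j == i); [exact: Xmeas | exact: measurable_cst].
Qed.

Lemma root_moment_scaled_trunc_le1 :
  (\int[P]_t (powR (\sum_i powR (\sum_(j | a j == i) Yassign X a j t) q)
                   q^-1)%:E <= M%:E)%E ->
  (\int[P]_t (powR (\sum_j scaled_trunc M q (Yassign X a j t)) q^-1)%:E <= 1)%E.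
Proof.
move=> load_le; apply: (@le_trans _ _ (\int[P]_t ((M^-1)%:E *
    (powR (\sum_i powR (\sum_(j | a j == i) Yassign X a j t) q) q^-1)%:E))%E).
  apply: ge0_le_integral => //.
  - by move=> t _; rewrite lee_fin powR_ge0.
  - apply/measurable_EFinP; apply: measurableT_comp (measurable_powR _) _.
    apply: measurable_sum => j.
    exact: measurableT_comp (measurable_scaled_trunc M q) (Xmeas _ _).
  - apply/measurable_EFinP; apply: measurable_funM => //.
    exact: measurable_load_norm.
  - move=> t _; rewrite -EFinM lee_fin root_sum_scaled_trunc_le // => j.
    exact: Xnonneg.
rewrite ge0_integralZl_EFin ?invr_ge0 ?(ltW hM) //; last first.
- exact/measurable_EFinP/measurable_load_norm.
- by move=> t _; rewrite lee_fin powR_ge0.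
apply: le_trans (lee_wpmul2l _ load_le) _; first by rewrite lee_fin invr_ge0 ltW.
by rewrite -EFinM mulVf ?gt_eqF.
Qed.

End rescaling.

Theorem mainTheorem13 (R : realType) (d : measure_display) (T : measurableType d)
  (P : probability T R) (m n : nat) (X : 'I_m -> 'I_n -> T -> R)
  (Xmeas : forall i j, measurable_fun setT (X i j))
  (Xnonneg : forall i j t, 0 <= X i j t)
  (Xindep : jobs_independent P X)
  (q M : R) (hq : 1 <= q) (hM : 0 < M)
  (a : 'I_n -> 'I_m)
  (hyp : (\int[P]_t
            (powR (\sum_(i < m) powR (\sum_(j < n | a j == i) Yassign X a j t) q)
                  q^-1)%:E
          <= M%:E)%E) :
  (\sum_(j < n) \int[P]_t (powR (trunc M (Yassign X a j t)) q)%:E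
     <= ((powR 2 (q + 1) + 8) * powR M q)%:E)%E.
Proof.
pose U j := scaled_trunc M q \o X (a j) j.
have mU j : measurable_fun setT (U j).
  exact: measurableT_comp (measurable_scaled_trunc M q) (Xmeas _ _).
have U01 j t : 0 <= U j t <= 1.
  by apply: scaled_trunc_itv; [exact: hM | lra | exact: Xnonneg].
have int_U j := bounded_integrable P _ _ (mU j) (U01 j).
have sum_le := sum_Rintegral_le_of_root_moment P _ _ mU U01 _ hq
  (pairwise_indep_jobs P _ _ _ a _ (measurable_scaled_trunc M q) Xindep)
  (root_moment_scaled_trunc_le1 P _ _ _ _ _ _ Xmeas Xnonneg hq hM hyp).
rewrite (eq_bigr (fun j => (powR M q * \int[P]_t U j t)%:E)) => [|j _].
  by rewrite sumEFin lee_fin -mulr_sumr mulrC ler_wpM2r ?powR_ge0.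
rewrite -RintegralZl // -EFin_Rintegral; last exact: integrable_EFinZl.
apply: eq_integral => t _; rewrite /U /scaled_trunc /Yassign /=.
by congr EFin; field; rewrite gt_eqF ?powR_gt0.
Qed.
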